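(* Let $N=2^n$ and let $a,a'\in[0,N)$ be such that there exist indices $0\le u<w<n$ with $b_k(a)=b_k(a')$ for all $k\in[0,n)\setminus\{u,w\}$, $b_u(a)=b_w(a')=1$ and $b_w(a)=b_u(a')=0$. Then $\mathrm{w}(\mathbf{g}_a)=\mathrm{w}(\mathbf{g}_{a'})$ and $s^{(n)}_a>s^{(n)}_{a'}$.
   Context: All vectors are binary (over $GF(2)$), indices are zero-based. Let $G_N=\begin{pmatrix}1&0\\1&1\end{pmatrix}^{\otimes n}$ for $N=2^n$, with rows $\mathbf{g}_0,\ldots,\mathbf{g}_{N-1}$; $\mathrm{w}(\cdot)$ is Hamming weight. $S^{(n)}_{i,w}$ is the number of words of weight $w$ in $\mathbf{g}_i+\langle\mathbf{g}_{i+1},\ldots,\mathbf{g}_{N-1}\rangle$, and $s^{(n)}_i:=S^{(n)}_{i,\mathrm{w}(\mathbf{g}_i)}$ (the first nonzero entry of $(S^{(n)}_{i,w})_w$). For $i\in[0,N)$, $b_j(i)$ denotes the $j$-th bit of $i$, i.e. $i=\sum_{j=0}^{n-1}b_j(i)2^j$. *)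

From HB Require Import structures.
From mathcomp Require Import all_boot all_order all_algebra.
Unset Printing Implicit Defensive.
Import GRing.Theory.
Local Open Scope ring_scope.

(* The 2x2 kernel F = [[1,0],[1,1]] over GF(2), indexed by naturals 0,1. *)
Definition kerF (a b : nat) : 'F_2 := if (a == 0%N) && (b == 1%N) then 0 else 1.

(* Entry (i,j) of the Kronecker power F^{(x) n}, via the literal Kronecker
   product rule  (F (x) A)[(i1,i2),(j1,j2)] = F[i1,j1] * A[i2,j2]
   with row/column index i = i1 * 2^(n) + i2 (zero-based). *)
Fixpoint kronF (n i j : nat) : 'F_2 :=
  match n with
  | 0 => 1
  | m.+1 => kerF (i %/ 2 ^ m) (j %/ 2 ^ m) * kronF m (i %% 2 ^ m) (j %% 2 ^ m)
  end.

Definition GN (n : nat) : 'M['F_2]_(2 ^ n) := \matrix_(i, j) kronF n i j.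

Definition grow (n : nat) (i : 'I_(2 ^ n)) : 'rV['F_2]_(2 ^ n) := row i (GN n).

Definition wt {N : nat} (v : 'rV['F_2]_N) : nat := #|[set j : 'I_N | v 0 j != 0]|.

(* matrix whose row space is <g_{i+1}, ..., g_{N-1}> *)
Definition tailM (n : nat) (i : 'I_(2 ^ n)) : 'M['F_2]_(2 ^ n) :=
  \matrix_(k, l) (if (i < k)%N then GN n k l else 0).

(* S^{(n)}_{i,w} : number of words of weight w in g_i + <g_{i+1},...,g_{N-1}> *)
Definition Scount (n : nat) (i : 'I_(2 ^ n)) (w : nat) : nat :=
  #|[set v : 'rV['F_2]_(2 ^ n) | ((v - grow n i) <= tailM n i)%MS && (wt v == w)]|.

Definition s_first (n : nat) (i : 'I_(2 ^ n)) : nat := Scount n i (wt (grow n i)).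

Definition bitn (j i : nat) : bool := odd (i %/ 2 ^ j).

From mathcomp Require Import all_boot all_order all_algebra.
From mathcomp Require Import zify ring.

(* The entry (i, j) of G_N is 1 iff the bits of j are among
   those of i, so exchanging bit positions u and w on both row and column
   indices is an automorphism of G_N.  It maps a' to a, so g_a' is a
   coordinate permutation of g_a, and it sends every index above a' above a,
   so it injects the coset of a' (weight preserved) into the coset of a.
   The word g_a + g_a' lies in the coset of a (as a < a'), has the weight of
   g_a (it is g_a with bit w flipped in the coordinates whose bit u is
   clear), but is not in the image: otherwise g_a would lie in the span of
   the rows above a', contradicting the invertibility G_N * G_N = I. *)

Lemma bitn_addMexp t m x q : (t < m)%N -> bitn t (x + q * 2 ^ m) = bitn t x.
Proof.
move=> tm; rewrite /bitn.
have -> : (q * 2 ^ m = (q * 2 ^ (m - t)) * 2 ^ t)%N.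
  by rewrite -mulnA -expnD subnK // ltnW.
rewrite divnDMl ?expn_gt0 // oddD oddM oddX.
by rewrite subn_eq0 leqNgt tm /= andbF addbF.
Qed.

Lemma bitn_modexp t m x : (t < m)%N -> bitn t (x %% 2 ^ m) = bitn t x.
Proof. by move=> tm; rewrite {2}(divn_eq x (2 ^ m)) addnC bitn_addMexp. Qed.

Lemma divn_exp_top m x : (x < 2 ^ m.+1)%N -> x %/ 2 ^ m = bitn m x.
Proof.
move=> xl; rewrite /bitn.
have : (x %/ 2 ^ m < 2)%N by rewrite ltn_divLR ?expn_gt0 // -expnS.
by case: (x %/ 2 ^ m) => [|[|]].
Qed.
Arguments divn_exp_top {m x}.

Definition of_bits (f : nat -> bool) (n : nat) : nat := (\sum_(t < n) f t * 2 ^ t)%N.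

Lemma of_bitsS f n : of_bits f n.+1 = (of_bits f n + f n * 2 ^ n)%N.
Proof. by rewrite /of_bits big_ord_recr. Qed.

Lemma of_bits_lt f n : (of_bits f n < 2 ^ n)%N.
Proof.
elim: n => [|n IH]; first by rewrite /of_bits big_ord0.
rewrite of_bitsS expnS mul2n -addnn; have := leq_b1 (f n).
case: (f n) => _ /=; rewrite ?mul1n ?mul0n; lia.
Qed.

Lemma bitn_of_bits f n s : (s < n)%N -> bitn s (of_bits f n) = f s.
Proof.
elim: n => [//|n IH] sn; rewrite of_bitsS.
case: (ltngtP s n) => [lt||]; first by rewrite bitn_addMexp // IH.
  by move=> h; move: sn; rewrite ltnS leqNgt h.
move=> ->; rewrite /bitn divnDMl ?expn_gt0 // divn_small ?of_bits_lt //.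
by case: (f n).
Qed.

Lemma of_bitsK j n : (j < 2 ^ n)%N -> of_bits (bitn^~ j) n = j.
Proof.
elim: n j => [|n IH] j jl.
  by rewrite /of_bits big_ord0; move: jl; rewrite expn0; case: j.
rewrite of_bitsS.
have -> : of_bits (bitn^~ j) n = of_bits (bitn^~ (j %% 2 ^ n)) n.
  by apply: eq_bigr => t _; rewrite bitn_modexp.
rewrite IH ?ltn_pmod ?expn_gt0 // -divn_exp_top // addnC -divn_eq //.
Qed.
Arguments of_bitsK {j n}.

Lemma bitn_inj {n i j} : (i < 2 ^ n)%N -> (j < 2 ^ n)%N ->
  (forall t, (t < n)%N -> bitn t i = bitn t j) -> i = j.
Proof.
move=> il jl h; rewrite -(of_bitsK il) -(of_bitsK jl).
by apply: eq_bigr => t _; rewrite h.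
Qed.

Definition ord_of_bits (n : nat) (f : nat -> bool) : 'I_(2 ^ n) :=
  Ordinal (of_bits_lt f n).

Lemma bitn_ord_of_bits n f t : (t < n)%N -> bitn t (ord_of_bits n f) = f t.
Proof. exact: bitn_of_bits. Qed.

Lemma ord_bitsP n (i j : 'I_(2 ^ n)) :
  (forall t, (t < n)%N -> bitn t i = bitn t j) -> i = j.
Proof. by move=> h; apply: val_inj; exact: bitn_inj (ltn_ord i) (ltn_ord j) h. Qed.

Import GRing.Theory.
Open Scope ring_scope.

(* Entries of the kernel: [kronF n i j = 1] iff the binary support of [j] is
   contained in that of [i] (Lucas' theorem for the Sierpinski matrix). *)
Definition bits_sub (n i j : nat) : bool :=
  all (fun t => bitn t j ==> bitn t i) (iota 0 n).

Lemma bits_subP n i j :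
  reflect (forall t, (t < n)%N -> bitn t j -> bitn t i) (bits_sub n i j).
Proof.
apply: (iffP allP) => h t.
  by move=> tn bj; have := h t; rewrite mem_iota add0n tn => /(_ isT); rewrite bj.
by rewrite mem_iota add0n => /h; case: (bitn t j) => // /(_ isT) ->.
Qed.

Lemma bits_sub_mod m i j : bits_sub m (i %% 2 ^ m) (j %% 2 ^ m) = bits_sub m i j.
Proof.
by apply: eq_in_all => t; rewrite mem_iota add0n => tm; rewrite !bitn_modexp.
Qed.

Lemma kronF_bits n i j : (i < 2 ^ n)%N -> (j < 2 ^ n)%N ->
  kronF n i j = if bits_sub n i j then 1 else 0.
Proof.
elim: n i j => [|m IH] i j il jl; first by [].
rewrite /= (divn_exp_top il) (divn_exp_top jl).
rewrite IH ?ltn_pmod ?expn_gt0 // bits_sub_mod {2}/bits_sub.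
have -> : iota 0 m.+1 = iota 0 m ++ [:: m] by rewrite -addn1 iotaD.
rewrite all_cat /= andbT -/(bits_sub m i j).
by case: (bits_sub m i j); case: (bitn m i); case: (bitn m j);
  rewrite /kerF /= ?mul1r ?mul0r ?mulr0 ?mulr1 ?andbF.
Qed.

(* Over GF(2) the kernel is an involution, G_N * G_N = I, since the 2x2
   factor F satisfies F^2 = I; in particular G_N is invertible. *)
Lemma kronF_involutive n i k : (i < 2 ^ n)%N -> (k < 2 ^ n)%N ->
  \sum_(j < 2 ^ n) kronF n i j * kronF n j k = if i == k then 1 else 0.
Proof.
elim: n i k => [|m IH] i k il kl.
  rewrite big_ord1 mulr1 /=; move: il kl; rewrite expn0.
  by case: i => // ?; case: k.
rewrite -(big_mkord xpredT (fun j => kronF m.+1 i j * kronF m.+1 j k)).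
have -> : (2 ^ m.+1 = 2 ^ m + 2 ^ m)%N by rewrite expnS mul2n addnn.
rewrite (@big_cat_nat _ _ _ (2 ^ m)%N) ?leq_addr //.
rewrite -{2}(add0n (2 ^ m)%N) big_addn addnK.
set S := \sum_(0 <= j < 2 ^ m) kronF m (i %% 2 ^ m) j * kronF m j (k %% 2 ^ m).
have low : \sum_(0 <= j < 2 ^ m) kronF m.+1 i j * kronF m.+1 j k =
    kerF (i %/ 2 ^ m) 0 * kerF 0 (k %/ 2 ^ m) * S.
  rewrite big_distrr /=; apply: eq_big_nat => j /andP [_ jl] /=.
  by rewrite (divn_small jl) (modn_small jl); ring.
have high : \sum_(0 <= j < 2 ^ m) kronF m.+1 i (j + 2 ^ m) * kronF m.+1 (j + 2 ^ m) k =
    kerF (i %/ 2 ^ m) 1 * kerF 1 (k %/ 2 ^ m) * S.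
  rewrite big_distrr /=; apply: eq_big_nat => j /andP [_ jl] /=.
  have -> : ((j + 2 ^ m) %/ 2 ^ m = 1)%N.
    by rewrite addnC divnDl ?dvdnn // divnn expn_gt0 divn_small // addn0.
  by rewrite modnDr (modn_small jl); ring.
rewrite low high /S big_mkord IH ?ltn_pmod ?expn_gt0 //.
have -> : (i == k) = ((i %/ 2 ^ m == k %/ 2 ^ m) && (i %% 2 ^ m == k %% 2 ^ m))%N.
  apply/eqP/andP => [-> //|[/eqP e1 /eqP e2]].
  by rewrite (divn_eq i (2 ^ m)) (divn_eq k (2 ^ m)) e1 e2.
rewrite (divn_exp_top il) (divn_exp_top kl).
case: (bitn m i); case: (bitn m k); case: (_ == _);
  rewrite /kerF /= ?mul1r ?mul0r ?mulr0 ?mulr1 ?add0r ?addr0 //.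
by apply/eqP.
Qed.

Lemma growE n (i j : 'I_(2 ^ n)) : grow n i 0 j = kronF n i j.
Proof. by rewrite !mxE. Qed.

(* Since G_N is invertible, no row g_a lies in the span of rows of larger
   index: multiplying by G_N isolates coordinate a. *)
Lemma grow_notin_tail n (a a' : 'I_(2 ^ n)) :
  (a < a')%N -> ~~ (grow n a <= tailM n a')%MS.
Proof.
move=> aa; apply/negP => /submxP [D hD].
have : (grow n a *m GN n) 0 a = 1.
  rewrite mxE; under eq_bigr => j _ do rewrite growE mxE.
  by rewrite kronF_involutive ?ltn_ord // eqxx.
rewrite hD -mulmxA mxE big1 ?(@oner_eq0 'F_2) // => k _; rewrite mxE.
under eq_bigr => j _ do rewrite /tailM !mxE.
case hk: (a' < k)%N; last by rewrite big1 ?mulr0 // => j _; rewrite mul0r.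
rewrite kronF_involutive ?ltn_ord //; case: eqP => [e|_]; last by rewrite mulr0.
by move: hk; rewrite e ltnNge ltnW.
Qed.

Definition permv {N : nat} (s : 'I_N -> 'I_N) (v : 'rV['F_2]_N) : 'rV['F_2]_N :=
  \row_j v 0 (s j).

Lemma permvK {N} {s : 'I_N -> 'I_N} : involutive s -> involutive (permv s).
Proof. by move=> sK v; apply/rowP => j; rewrite !mxE sK. Qed.

Lemma permvD N (s : 'I_N -> 'I_N) v1 v2 :
  permv s (v1 + v2) = permv s v1 + permv s v2.
Proof. by apply/rowP => j; rewrite !mxE. Qed.

Lemma permvB N (s : 'I_N -> 'I_N) v1 v2 :
  permv s (v1 - v2) = permv s v1 - permv s v2.
Proof. by apply/rowP => j; rewrite !mxE. Qed.

Lemma wt_permv N (s : 'I_N -> 'I_N) v : injective s -> wt (permv s v) = wt v.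
Proof.
move=> s_inj; rewrite /wt.
have -> : [set j | permv s v 0 j != 0] = s @^-1: [set j | v 0 j != 0].
  by apply/setP => j; rewrite !inE mxE.
exact: card_preimset.
Qed.

Section KernelAutomorphism.
Variables (n : nat) (s : 'I_(2 ^ n) -> 'I_(2 ^ n)).
Hypothesis sK : involutive s.
Hypothesis s_kron : forall i j, kronF n (s i) (s j) = kronF n i j.

Lemma permv_grow i : permv s (grow n i) = grow n (s i).
Proof. by apply/rowP => j; rewrite mxE !growE -{1}(sK i) s_kron. Qed.

Lemma tail_permv (a a' : 'I_(2 ^ n)) x :
  (forall k : 'I_(2 ^ n), (a' < k)%N -> (a < s k)%N) ->
  (x <= tailM n a')%MS -> (permv s x <= tailM n a)%MS.
Proof.
move=> s_tail /submxP [D ->]; apply/submxP.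
exists (\row_k (if (a' < s k)%N then D 0 (s k) else 0)).
apply/rowP => j; rewrite !mxE (reindex_inj (can_inj sK)).
apply: eq_bigr => k _; rewrite /tailM !mxE.
case hk: (a' < s k)%N; last by rewrite mulr0 mul0r.
by have := s_tail _ hk; rewrite sK => ->; rewrite s_kron.
Qed.

End KernelAutomorphism.
Arguments permv_grow {n s}.
Arguments tail_permv {n s} sK s_kron {a a' x}.

Definition swap_idx (u w t : nat) : nat :=
  if t == u then w else if t == w then u else t.

Definition swap_bits {n : nat} (u w : nat) (j : 'I_(2 ^ n)) : 'I_(2 ^ n) :=
  ord_of_bits n (fun t => bitn (swap_idx u w t) j).

Lemma swap_idxK u w : involutive (swap_idx u w).
Proof.
move=> t; rewrite /swap_idx; case: (eqVneq t u) => [->|tu].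
  by case: (eqVneq w u) => [->|wu]; rewrite ?eqxx.
case: (eqVneq t w) => [->|tw]; first by rewrite eqxx.
by rewrite (negPf tu) (negPf tw).
Qed.

Lemma swap_idx_lt {n u w t} :
  (u < n)%N -> (w < n)%N -> (t < n)%N -> (swap_idx u w t < n)%N.
Proof. by rewrite /swap_idx; case: (t == u) => //; case: (t == w). Qed.

Section SwapBits.
Variables (n u w : nat).
Hypotheses (un : (u < n)%N) (wn : (w < n)%N).

Lemma swap_bitsK : involutive (@swap_bits n u w).
Proof.
move=> j; apply: ord_bitsP => t tn.
by rewrite !bitn_ord_of_bits ?swap_idx_lt // swap_idxK.
Qed.

(* Permuting bit positions preserves bitwise inclusion, hence G_N. *)
Lemma kronF_swap (i j : 'I_(2 ^ n)) :
  kronF n (swap_bits u w i) (swap_bits u w j) = kronF n i j.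
Proof.
rewrite !kronF_bits ?ltn_ord //; congr (if _ then _ else _).
apply/bits_subP/bits_subP => h t tn.
  have := h (swap_idx u w t) (swap_idx_lt un wn tn).
  by rewrite !bitn_ord_of_bits ?swap_idx_lt // swap_idxK.
by rewrite !bitn_ord_of_bits //; apply: h; apply: swap_idx_lt.
Qed.

Lemma swap_bits_value (j : 'I_(2 ^ n)) : u != w ->
  (swap_bits u w j + bitn u j * 2 ^ u + bitn w j * 2 ^ w =
   j + bitn w j * 2 ^ u + bitn u j * 2 ^ w)%N.
Proof.
move=> uw.
pose rest (f : nat -> nat) :=
  (\sum_(t < n | (nat_of_ord t != u) && (nat_of_ord t != w)) f t)%N.
have split2 (f : nat -> nat) : (\sum_(t < n) f t = f u + f w + rest f)%N.
  rewrite (bigD1 (Ordinal un)) //= (bigD1 (Ordinal wn)) /=; last first.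
    by rewrite -val_eqE /= eq_sym.
  by rewrite addnA.
have ej := of_bitsK (ltn_ord j).
rewrite /of_bits (split2 (fun t => bitn t j * 2 ^ t)%N) in ej.
rewrite /= /of_bits (split2 (fun t => bitn (swap_idx u w t) j * 2 ^ t)%N).
have -> : rest (fun t => bitn (swap_idx u w t) j * 2 ^ t)%N =
          rest (fun t => bitn t j * 2 ^ t)%N.
  by apply: eq_bigr => t /andP [tu tw]; rewrite /swap_idx (negPf tu) (negPf tw).
rewrite /swap_idx eqxx eq_sym (negPf uw) eqxx.
move: ej; set S := rest _.
set p1 := (bitn u j * 2 ^ u)%N; set p2 := (bitn w j * 2 ^ w)%N.
set p3 := (bitn w j * 2 ^ u)%N; set p4 := (bitn u j * 2 ^ w)%N.
lia.
Qed.

End SwapBits.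
Arguments swap_bitsK {n u w}.
Arguments kronF_swap {n u w}.
Arguments swap_bits_value {n u w}.

Lemma bits_subN {n i j t} :
  (t < n)%N -> bitn t j -> ~~ bitn t i -> bits_sub n i j = false.
Proof. by move=> tn bj bi; apply/negbTE/bits_subP => /(_ t tn bj); apply/negP. Qed.

Lemma bits_sub_congr n (P : pred nat) i j i' j' :
  (forall t, (t < n)%N -> P t -> bitn t j ==> bitn t i) ->
  (forall t, (t < n)%N -> P t -> bitn t j' ==> bitn t i') ->
  (forall t, (t < n)%N -> ~~ P t -> bitn t i = bitn t i' /\ bitn t j = bitn t j') ->
  bits_sub n i j = bits_sub n i' j'.
Proof.
move=> hP hP' agree; apply/bits_subP/bits_subP => h t tn bt.
  case Pt: (P t); first exact: implyP (hP' t tn Pt) bt.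
  have [ei ej] := agree t tn (negbT Pt); by rewrite -ei h ?ej.
case Pt: (P t); first exact: implyP (hP t tn Pt) bt.
have [ei ej] := agree t tn (negbT Pt); by rewrite ei h -?ej.
Qed.

Definition cond_flip {n : nat} (u w : nat) (j : 'I_(2 ^ n)) : 'I_(2 ^ n) :=
  ord_of_bits n (fun t => if bitn u j then bitn t j else (t == w) (+) bitn t j).

Section CondFlip.
Variables (n u w : nat).
Hypotheses (un : (u < n)%N) (wn : (w < n)%N) (uw : u != w).

Lemma bitn_cond_flip_other (j : 'I_(2 ^ n)) t :
  (t < n)%N -> t != w -> bitn t (cond_flip u w j) = bitn t j.
Proof. by move=> tn tw; rewrite bitn_ord_of_bits // (negPf tw); case: ifP. Qed.

Lemma bitn_cond_flip_w (j : 'I_(2 ^ n)) :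
  bitn w (cond_flip u w j) = ~~ bitn u j (+) bitn w j.
Proof. by rewrite bitn_ord_of_bits // eqxx; case: (bitn u j). Qed.

Lemma cond_flip_id (j : 'I_(2 ^ n)) : bitn u j -> cond_flip u w j = j.
Proof.
move=> bu; apply: ord_bitsP => t tn.
by rewrite bitn_ord_of_bits // bu.
Qed.

Lemma cond_flipK : involutive (@cond_flip n u w).
Proof.
move=> j; apply: ord_bitsP => t tn.
rewrite [in LHS]bitn_ord_of_bits // bitn_cond_flip_other //.
case bu: (bitn u j); rewrite bitn_ord_of_bits // bu //.
by case: (t == w); rewrite ?addbA ?addbb.
Qed.

End CondFlip.
Arguments bitn_cond_flip_other {n u w}.
Arguments bitn_cond_flip_w {n u w}.
Arguments cond_flip_id {n u w}.
Arguments cond_flipK {n u w}.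

Definition coset_words (n : nat) (i : 'I_(2 ^ n)) (m : nat) : {set 'rV['F_2]_(2 ^ n)} :=
  [set v | ((v - grow n i) <= tailM n i)%MS && (wt v == m)].

Lemma ScountE n i m : Scount n i m = #|coset_words n i m|.
Proof. by []. Qed.

Section BitTransfer.
Variables (n : nat) (a a' : 'I_(2 ^ n)) (u w : nat).
Hypotheses (uw : (u < w)%N) (wn : (w < n)%N).
Hypothesis agree : forall k, (k < n)%N -> k != u -> k != w -> bitn k a = bitn k a'.
Hypotheses (au : bitn u a) (a'w : bitn w a') (aw : bitn w a = false)
  (a'u : bitn u a' = false).

Let un : (u < n)%N := ltn_trans uw wn.
Let u_neq_w : u != w := negbT (ltn_eqF uw).

Let swap := @swap_bits n u w.
Let swapK : involutive swap := swap_bitsK un wn.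

Lemma swap_a' : swap a' = a.
Proof.
apply: ord_bitsP => t tn; rewrite bitn_ord_of_bits // /swap_idx.
case: (eqVneq t u) => [->|tu]; first by rewrite a'w au.
case: (eqVneq t w) => [->|tw]; first by rewrite a'u aw.
by rewrite agree.
Qed.

Lemma permv_swap_grow_a' : permv swap (grow n a') = grow n a.
Proof. by rewrite (permv_grow swapK (kronF_swap un wn)) swap_a'. Qed.

Lemma permv_swap_grow_a : permv swap (grow n a) = grow n a'.
Proof. by rewrite -permv_swap_grow_a' permvK. Qed.

Lemma wt_grow_transfer : wt (grow n a) = wt (grow n a').
Proof. by rewrite -permv_swap_grow_a' wt_permv //; exact: can_inj swapK. Qed.

(* Numerically, [a' = a - 2^u + 2^w]; more generally the swap can lower an
   index by at most [2^w - 2^u], which is what keeps tails inside tails. *)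
Lemma lt_a_a' : (a < a')%N.
Proof.
have := swap_bits_value un wn a' u_neq_w; rewrite -/swap swap_a' a'u a'w.
have : (2 ^ u < 2 ^ w)%N by rewrite ltn_exp2l.
lia.
Qed.

Lemma swap_above (k : 'I_(2 ^ n)) : (a' < k)%N -> (a < swap k)%N.
Proof.
have : (2 ^ u < 2 ^ w)%N by rewrite ltn_exp2l.
have := swap_bits_value un wn k u_neq_w; rewrite -/swap.
have := swap_bits_value un wn a' u_neq_w; rewrite -/swap swap_a' a'u a'w.
by case: (bitn u k); case: (bitn w k); rewrite /= ?mul0n ?mul1n; lia.
Qed.

(* The extra word g_a + g_a' is g_a with its coordinates permuted by the
   conditional flip; hence it has the weight of g_a. *)
Lemma grow_add_cond_flip :
  grow n a + grow n a' = permv (cond_flip u w) (grow n a).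
Proof.
pose P t := (t == u) || (t == w).
apply/rowP => j; rewrite !mxE !kronF_bits ?ltn_ord //.
case bu: (bitn u j).
  by rewrite cond_flip_id // (bits_subN (i := a') un bu) ?a'u // addr0.
have flip_u : bitn u (cond_flip u w j) = false by rewrite bitn_cond_flip_other.
have flip_w : bitn w (cond_flip u w j) = ~~ bitn w j.
  by rewrite (bitn_cond_flip_w wn) bu.
case bw: (bitn w j).
  rewrite (bits_subN (i := a) wn bw) ?aw // add0r.
  congr (if _ then _ else _); apply: (bits_sub_congr _ P) => t tn.
  - by case/orP => /eqP ->; rewrite ?bu ?bw.
  - by case/orP => /eqP ->; rewrite ?flip_u ?flip_w ?bw.
  - by case/norP => tu tw; rewrite bitn_cond_flip_other // agree.
rewrite (bits_subN (i := a) (j := cond_flip u w j) wn) ?flip_w ?bw ?aw //.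
have -> : bits_sub n a' j = bits_sub n a j.
  apply: (bits_sub_congr _ P) => t tn.
  - by case/orP => /eqP ->; rewrite ?bu ?bw.
  - by case/orP => /eqP ->; rewrite ?bu ?bw.
  - by case/norP => tu tw; rewrite agree.
by case: (bits_sub n a j); apply/eqP.
Qed.

Lemma swap_coset_words m :
  permv swap @: coset_words n a' m \subset coset_words n a m.
Proof.
apply/subsetP => _ /imsetP [x + ->]; rewrite !inE => /andP [x_tail /eqP <-].
rewrite -permv_swap_grow_a' -permvB wt_permv ?eqxx ?andbT; last exact: can_inj swapK.
exact: (tail_permv swapK (kronF_swap un wn) swap_above x_tail).
Qed.

Lemma extra_word_in_coset :
  grow n a + grow n a' \in coset_words n a (wt (grow n a)).
Proof.
rewrite inE grow_add_cond_flip wt_permv ?eqxx ?andbT;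
  last exact: can_inj (cond_flipK un u_neq_w).
rewrite -grow_add_cond_flip (addrC (grow n a)) addrK.
have <- : row a' (tailM n a) = grow n a' by apply/rowP => j; rewrite !mxE lt_a_a'.
exact: row_sub.
Qed.

(* Its preimage under the swap would be g_a' + g_a, forcing g_a into the
   span of rows above [a'] although a < a'. *)
Lemma extra_word_fresh m :
  grow n a + grow n a' \notin permv swap @: coset_words n a' m.
Proof.
apply/imsetP => [[x + x_def]]; rewrite inE => /andP [+ _].
have -> : x = grow n a' + grow n a.
  by rewrite -(permvK swapK x) -x_def permvD permv_swap_grow_a permv_swap_grow_a'.
by rewrite (addrC (grow n a')) addrK; apply/negP; apply: grow_notin_tail lt_a_a'.
Qed.

Lemma s_first_transfer_lt : (s_first n a' < s_first n a)%N.
Proof.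
rewrite /s_first !ScountE -wt_grow_transfer.
set m := wt (grow n a).
have sub : grow n a + grow n a' |: permv swap @: coset_words n a' m
    \subset coset_words n a m.
  by rewrite subUset sub1set extra_word_in_coset swap_coset_words.
have swap_inj : injective (permv swap) := can_inj (permvK swapK).
by have := subset_leq_card sub; rewrite cardsU1 extra_word_fresh card_imset.
Qed.

End BitTransfer.

Theorem mainTheorem4 (n : nat) (a a' : 'I_(2 ^ n)) (u w : nat) :
  (u < w)%N -> (w < n)%N ->
  (forall k, (k < n)%N -> k != u -> k != w -> bitn k a = bitn k a') ->
  bitn u a = true -> bitn w a' = true ->
  bitn w a = false -> bitn u a' = false ->
  wt (grow n a) = wt (grow n a') /\ (s_first n a' < s_first n a)%N.
Proof.
move=> uw wn agree au a'w aw a'u; split.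
  exact: wt_grow_transfer uw wn agree au a'w aw a'u.
exact: s_first_transfer_lt uw wn agree au a'w aw a'u.
Qed.
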